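(* Let $M_t, L, K$ be positive integers, let $1\le L'\le L$, let $\mathbf h_1,\dots,\mathbf h_L\in\mathbb C^{M_t}$, let $n_1,\dots,n_L$ be pairwise distinct nonnegative integers, let $\sigma>0$, and let $n'_{\rm span}$ be an integer with $0\le n'_{\rm span}<n_{\rm span}$. With $\kappa_{l'}$, $\bar{\mathbf H}_{l'}^{\perp}$, $\mathbf g_k$ and $\mathbf V_k$ defined as in the context, for every $k\in\{0,1,\dots,K-1\}$ we have $\mathbf g_k=\mathbf V_k\mathbf e_k$, where $$\mathbf e_k=\frac{1}{\sigma}\sum_{l=1}^{L}\mathbf h_l\, e^{j\frac{2\pi}{K}k\,(n_l-n_{\max}+n'_{\rm span})}\in\mathbb C^{M_t}.$$
   Context: Here $j$ is the imaginary unit and $(\cdot)^H$ denotes conjugate transpose. Set $n_{\max}=\max_{1\le l\le L}n_l$ and $n_{\rm span}=n_{\max}-\min_{1\le l\le L}n_l$. For $l'=1,\dots,L'$ define the delay pre-compensation $\kappa_{l'}=n_{\max}-n_{L-L'+l'}$. For each $l'$ define the index sets $\mathcal L_{l'}=\{1\le l\le L:\ n_l+\kappa_{l'}\notin[n_{\max}-n'_{\rm span},\,n_{\max}]\}$ and $\bar{\mathcal L}_{l'}=\{1,\dots,L\}\setminus\mathcal L_{l'}$. Let $\bar{\mathbf H}_{l'}\in\mathbb C^{M_t\times|\mathcal L_{l'}|}$ be the matrix whose columns are the $\mathbf h_l$ with $l\in\mathcal L_{l'}$, and let $\bar{\mathbf H}_{l'}^{\perp}\in\mathbb C^{M_t\times\bar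 r_{l'}}$ be a matrix whose columns form an orthonormal basis of the orthogonal complement (in $\mathbb C^{M_t}$) of the column space of $\bar{\mathbf H}_{l'}$ (if $\mathcal L_{l'}=\emptyset$ this complement is all of $\mathbb C^{M_t}$). For $t\in\{0,1,\dots,n'_{\rm span}\}$ define $\mathbf g_{l'}[t]=\mathbf h_l$ if there exists $l\in\bar{\mathcal L}_{l'}$ with $n_l+\kappa_{l'}=t+n_{\max}-n'_{\rm span}$ (such $l$ is unique since the delays are distinct), and $\mathbf g_{l'}[t]=\mathbf 0$ otherwise. For $k\in\{0,\dots,K-1\}$ define $\mathbf g_{kl'}=\frac1\sigma\sum_{t=0}^{n'_{\rm span}}\mathbf g_{l'}[t]e^{j\frac{2\pi}{K}kt}\in\mathbb C^{M_t}$, let $R=\sum_{l'=1}^{L'}\bar r_{l'}$, define the stacked vector $\mathbf g_k=\big[\mathbf g_{k1}^H\bar{\mathbf H}_1^{\perp},\dots,\mathbf g_{kL'}^H\bar{\mathbf H}_{L'}^{\perp}\big]^H\in\mathbb C^{R}$, and define $\mathbf V_k=\big[\bar{\mathbf H}_1^{\perp}e^{-j\frac{2\pi}{K}k\kappa_1},\dots,\bar{\mathbf H}_{L'}^{\perp}e^{-j\frac{2\pi}{K}k\kappa_{L'}}\big]^H\in\mathbb C^{R\times M_t}$. *)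

From HB Require Import structures.
From mathcomp Require Import all_boot all_order all_algebra.
From mathcomp Require Import complex.
From mathcomp Require Import reals trigo.
Set Implicit Arguments. Unset Strict Implicit. Unset Printing Implicit Defensive.
Import Order.TTheory GRing.Theory Num.Theory.
Local Open Scope ring_scope.

Section Defs.
Variable R : realType.

Definition expj (x : R) : R[i] := Complex (cos x) (sin x).

Definition ctr (m n : nat) (A : 'M[R[i]]_(m, n)) : 'M[R[i]]_(n, m) :=
  (map_mx Num.conj A)^T.

Variables (Mt L K L' : nat).
Variable h : 'I_L -> 'cV[R[i]]_Mt.
Variable n : 'I_L -> nat.
Variable sigma : R.
Variable nspan' : nat.

Definition n_max : nat := \max_(l < L) n l.
Definition n_min : nat := \big[minn/n_max]_(l < L) n l.
Definition n_span : nat := n_max - n_min.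

(* l' : 'I_L' is the 0-based version of l' in {1..L'}; the 1-based index
   L - L' + l' becomes the 0-based index L - L' + l'. *)
(* delay at a nat index (the index is always < L when L' <= L) *)
Definition n_at (i : nat) : nat :=
  match @insub _ (fun j => (j < L)%N) 'I_L i with Some l => n l | None => 0%N end.

Definition kappa (l' : 'I_L') : nat := n_max - n_at (L - L' + l').

Definition calL (l' : 'I_L') : pred 'I_L :=
  fun l => ~~ ((n_max - nspan' <= n l + kappa l')%N && (n l + kappa l' <= n_max)%N).

Definition calLbar (l' : 'I_L') : pred 'I_L := fun l => ~~ calL l' l.

(* P is a matrix whose columns form an orthonormal basis of the orthogonal
   complement of the column space of \bar H_{l'} = [h_l]_{l in calL l'}. *)
Definition orth_compl_basis (l' : 'I_L') (r : nat) (P : 'M[R[i]]_(Mt, r)) : Prop :=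
  ctr P *m P = 1%:M /\
  forall v : 'cV[R[i]]_Mt,
    (exists w : 'cV[R[i]]_r, v = P *m w) <->
    (forall l, calL l' l -> ctr (h l) *m v = 0).

Definition gt (l' : 'I_L') (t : nat) : 'cV[R[i]]_Mt :=
  match [pick l | calLbar l' l && (n l + kappa l' == t + (n_max - nspan'))%N] with
  | Some l => h l
  | None => 0
  end.

Definition theta (k : nat) : R := (2 * pi / K%:R) * k%:R.

Definition gkl (k : nat) (l' : 'I_L') : 'cV[R[i]]_Mt :=
  (sigma^-1)%:C%C *: \sum_(t < nspan'.+1) (expj (theta k * t%:R) *: gt l' t).

Definition ek (k : nat) : 'cV[R[i]]_Mt :=
  (sigma^-1)%:C%C *: \sum_(l < L)
     (expj (theta k * ((n l)%:R - n_max%:R + nspan'%:R)) *: h l).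

Variable r : 'I_L' -> nat.
Variable P : forall l' : 'I_L', 'M[R[i]]_(Mt, r l').

Definition gk (k : nat) : 'cV[R[i]]_(\sum_(l' < L') r l') :=
  \mxcol_(l' < L') ctr (ctr (gkl k l') *m P l').

Definition Vk (k : nat) : 'M[R[i]]_(\sum_(l' < L') r l', Mt) :=
  \mxcol_(l' < L') ctr (expj (- (theta k * (kappa l')%:R)) *: P l').

End Defs.

From HB Require Import structures.
From mathcomp Require Import all_boot all_order all_algebra.
From mathcomp Require Import complex.
From mathcomp Require Import reals trigo.
From mathcomp Require Import ring lra zify.
Import Order.TTheory GRing.Theory Num.Theory.
Local Open Scope ring_scope.

(* Both sides are stacks of blocks [P^H x]. On the left, [g_{l'}[t]] is [h_l]
   for the unique [l] in the delay window whose shifted delay is [t], so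
   [g_{kl'}] is a sum over that window with phases [e^{j theta t_l}]. On the
   right, [P^H] kills every [h_l] outside the window, and inside it the
   pre-compensation phase [e^{j theta kappa}] turns the phase of [e_k] into
   the same [e^{j theta t_l}], since [t_l = kappa + n_l - n_max + n'_span]. *)

Section ConjTranspose.
Variable R : realType.

Lemma expjD (a b : R) : expj a * expj b = expj (a + b).
Proof.
rewrite /expj cosD sinD; apply/eqP; rewrite eq_complex /=.
by apply/andP; split; apply/eqP; ring.
Qed.

Lemma conj_expj (a : R) : Num.conj (expj a) = expj (- a).
Proof. by rewrite /expj cosN sinN. Qed.

Lemma ctr_mul m n p (A : 'M[R[i]]_(m, n)) (B : 'M[R[i]]_(n, p)) :
  ctr (A *m B) = ctr B *m ctr A.
Proof. by rewrite /ctr map_mxM trmx_mul. Qed.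

Lemma ctrK m n (A : 'M[R[i]]_(m, n)) : ctr (ctr A) = A.
Proof.
rewrite /ctr map_trmx trmxK -map_mx_comp.
by apply: map_mx_id => x /=; exact: conjCK.
Qed.

Lemma ctrZ m n a (A : 'M[R[i]]_(m, n)) : ctr (a *: A) = Num.conj a *: ctr A.
Proof. by rewrite /ctr map_mxZ linearZ. Qed.

Lemma ctr0 m n : ctr (0 : 'M[R[i]]_(m, n)) = 0.
Proof. by apply/matrixP => i j; rewrite !mxE; exact: conjc0. Qed.

Lemma ctr_mul_eq0 m r (P : 'M[R[i]]_(m, r)) (v : 'cV[R[i]]_m) :
  (forall w : 'cV_r, ctr v *m (P *m w) = 0) -> ctr P *m v = 0.
Proof.
move=> vP0; have vP : ctr v *m P = 0.
  apply/matrixP => i j; have := vP0 (delta_mx j 0).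
  by rewrite mulmxA -colE => /matrixP/(_ i 0); rewrite !mxE.
by rewrite -[v]ctrK -ctr_mul vP ctr0.
Qed.

End ConjTranspose.

Lemma pick_sum_uniq (T : finType) (V : nmodType) (p : pred T) (F : T -> V) :
  (forall x y, p x -> p y -> x = y) ->
  (if [pick x | p x] is Some x then F x else 0) = \sum_(x | p x) F x.
Proof.
move=> p_uniq; case: pickP => [x0 px0 | p0]; last by rewrite big_pred0.
rewrite (bigD1 x0) //= big1 ?addr0 // => x /andP[px].
by rewrite (p_uniq _ _ px px0) eqxx.
Qed.

Lemma nspan'_le_n_max {L : nat} {n : 'I_L -> nat} {nspan' : nat} :
  (nspan' < n_span n)%N -> (nspan' <= n_max n)%N.
Proof. by rewrite /n_span; lia. Qed.

Section DelayWindow.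
Context {R : realType} {Mt L L' : nat}.
Context {h : 'I_L -> 'cV[R[i]]_Mt} {n : 'I_L -> nat} {nspan' : nat}.
Hypothesis n_inj : injective n.
Hypothesis nspan'_le : (nspan' <= n_max n)%N.

Definition tap (l' : 'I_L') (l : 'I_L) : nat :=
  n l + kappa n l' - (n_max n - nspan').

Lemma calLbarE (l' : 'I_L') l :
  calLbar n nspan' l' l =
  (n_max n - nspan' <= n l + kappa n l' <= n_max n)%N.
Proof. by rewrite /calLbar /calL negbK. Qed.

Lemma gt_sum (l' : 'I_L') t :
  gt h n nspan' l' t =
  \sum_(l | calLbar n nspan' l' l &&
            (n l + kappa n l' == t + (n_max n - nspan'))%N) h l.
Proof.
apply: pick_sum_uniq => l1 l2 /andP[_ /eqP E1] /andP[_ /eqP E2].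
by apply: n_inj; lia.
Qed.

Lemma sum_gt_window (c : nat -> R[i]) (l' : 'I_L') :
  \sum_(t < nspan'.+1) c t *: gt h n nspan' l' t =
  \sum_(l | calLbar n nspan' l' l) c (tap l' l) *: h l.
Proof.
under eq_bigr do rewrite gt_sum scaler_sumr.
rewrite (exchange_big_dep (calLbar n nspan' l')) /=; last by move=> t l _ /andP[].
apply: eq_bigr => l; rewrite calLbarE => /andP[lo hi].
have tap_lt : (tap l' l < nspan'.+1)%N by rewrite /tap; lia.
rewrite (big_pred1 (Ordinal tap_lt)) // => t; rewrite lo hi /=.
apply/eqP/eqP => [E | ->]; last by rewrite /= /tap; lia.
by apply/val_inj; rewrite /= /tap; lia.
Qed.

Lemma tap_natr {l' : 'I_L'} {l} : calLbar n nspan' l' l ->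
  (tap l' l)%:R = (kappa n l')%:R + ((n l)%:R - (n_max n)%:R + nspan'%:R) :> R.
Proof.
rewrite calLbarE => /andP[lo _].
have E : (tap l' l + n_max n = kappa n l' + n l + nspan')%N by rewrite /tap; lia.
have := congr1 (fun x : nat => x%:R : R) E; rewrite !natrD => E'; lra.
Qed.

Lemma orth_compl_basis_window {l' : 'I_L'} {r} {P : 'M[R[i]]_(Mt, r)}
    (c : 'I_L -> R[i]) :
  orth_compl_basis h n nspan' l' P ->
  ctr P *m \sum_(l < L) c l *: h l =
  ctr P *m \sum_(l | calLbar n nspan' l' l) c l *: h l.
Proof.
case=> _ PE; rewrite (bigID (calLbar n nspan' l')) /= mulmxDr -[RHS]addr0.
congr (_ + _); rewrite mulmx_sumr big1 // => l; rewrite negbK => lL.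
rewrite -scalemxAr ctr_mul_eq0 ?scaler0 // => w.
by apply: (proj1 (PE _)) => //; exists w.
Qed.

End DelayWindow.

Theorem theorem2 (R : realType) (Mt L K L' : nat)
  (hMt : (0 < Mt)%N) (hL : (0 < L)%N) (hK : (0 < K)%N)
  (hL'1 : (1 <= L')%N) (hL'L : (L' <= L)%N)
  (h : 'I_L -> 'cV[R[i]]_Mt) (n : 'I_L -> nat) (hn : injective n)
  (sigma : R) (hsigma : 0 < sigma)
  (nspan' : nat) (hnspan' : (nspan' < n_span n)%N)
  (r : 'I_L' -> nat) (P : forall l' : 'I_L', 'M[R[i]]_(Mt, r l'))
  (hP : forall l' : 'I_L', orth_compl_basis h n nspan' l' (P l'))
  (k : 'I_K) :
  gk K h n sigma nspan' P k = Vk K n P k *m ek K h n sigma nspan' k.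
Proof.
have nspan'_le := nspan'_le_n_max hnspan'.
rewrite /gk /Vk mxcol_mul; apply/eq_mxcol => l'.
rewrite ctr_mul ctrK ctrZ conj_expj opprK -scalemxAl /gkl /ek.
rewrite -!scalemxAr scalerA mulrC -scalerA; congr (_ *: _).
rewrite (sum_gt_window hn nspan'_le (fun t => expj (theta R K k * t%:R))).
rewrite (orth_compl_basis_window _ (hP l')) scalemxAr scaler_sumr.
congr (_ *m _); apply: eq_bigr => l lL.
by rewrite scalerA expjD -mulrDr (tap_natr nspan'_le lL).
Qed.
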